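(* Let $\Omega\subsetneq\mathbb{S}^m$ be a domain and $\rho:\Omega\to\mathbb{R}$ a smooth proper function. Then the associated map $\phi:\Omega\to\mathbb{H}^{m+1}$ is proper.
   Context: $\mathbb{S}^m\subset\mathbb{R}^{m+1}$ is the unit sphere with round metric $g_0$; $\nabla$ and $|\cdot|$ denote gradient and norm with respect to $g_0$. Let $\mathbb{L}^{m+2}$ be $\mathbb{R}^{m+2}$ with $\langle\!\langle x,y\rangle\!\rangle=-x_0y_0+\sum_{i=1}^{m+1}x_iy_i$, and $\mathbb{H}^{m+1}=\{x:\langle\!\langle x,x\rangle\!\rangle=-1,\ x_0>0\}$. For $\rho\in C^1(\Omega)$ the associated map $\phi=\phi^\rho:\Omega\to\mathbb{H}^{m+1}$ is $$\phi(x)=\frac{e^{\rho(x)}}{2}\Big(1+e^{-2\rho(x)}\big(1+|\nabla\rho(x)|^2\big)\Big)(1,x)+e^{-\rho(x)}\big(0,-x+\nabla\rho(x)\big).$$ Proper means preimages of compact sets are compact. *)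

From Stdlib Require Import Reals List.
Open Scope R_scope.

(* Points of R^n are represented as functions nat -> R whose coordinates
   of index >= n vanish (see inRn). *)
Definition vec := nat -> R.

Fixpoint sumR (n : nat) (f : nat -> R) : R :=
  match n with O => 0 | S k => sumR k f + f k end.

Definition inRn (n : nat) (x : vec) : Prop := forall i, (n <= i)%nat -> x i = 0.

Definition dotn (n : nat) (x y : vec) : R := sumR n (fun i => x i * y i).
Definition normn (n : nat) (x : vec) : R := sqrt (dotn n x x).
Definition distn (n : nat) (x y : vec) : R :=
  sqrt (sumR n (fun i => (x i - y i) ^ 2)).

Definition vadd (x y : vec) : vec := fun i => x i + y i.
Definition vscale (a : R) (x : vec) : vec := fun i => a * x i.
Definition evec (i : nat) : vec := fun j => if Nat.eqb i j then 1 else 0.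

Definition balln (n : nat) (p : vec) (eps : R) (y : vec) : Prop :=
  inRn n y /\ distn n p y < eps.

Definition open_n (n : nat) (V : vec -> Prop) : Prop :=
  forall x, V x -> exists eps, 0 < eps /\ forall y, balln n x eps y -> V y.

Definition compact_n (n : nat) (K : vec -> Prop) : Prop :=
  (forall x, K x -> inRn n x) /\
  forall (I : Type) (U : I -> vec -> Prop),
    (forall i, open_n n (U i)) ->
    (forall x, K x -> exists i, U i x) ->
    exists l : list I, forall x, K x -> exists i, In i l /\ U i x.

Definition sphere (m : nat) (x : vec) : Prop :=
  inRn (S m) x /\ dotn (S m) x x = 1.

Definition open_in_sphere (m : nat) (Om : vec -> Prop) : Prop :=
  forall x, Om x -> sphere m x /\
    exists eps, 0 < eps /\ forall y, sphere m y -> distn (S m) x y < eps -> Om y.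

Definition connected_n (n : nat) (Om : vec -> Prop) : Prop :=
  forall A B : vec -> Prop, open_n n A -> open_n n B ->
    (forall x, Om x -> A x \/ B x) ->
    (forall x, Om x -> A x -> B x -> False) ->
    (forall x, Om x -> A x) \/ (forall x, Om x -> B x).

Definition sphere_domain (m : nat) (Om : vec -> Prop) : Prop :=
  (exists x, Om x) /\ open_in_sphere m Om /\ connected_n (S m) Om.

Fixpoint Ck (n k : nat) (U : vec -> Prop) (F : vec -> R) : Prop :=
  match k with
  | O => forall x, U x -> forall e, 0 < e -> exists d, 0 < d /\
           forall y, U y -> distn n x y < d -> Rabs (F y - F x) < e
  | S k' => exists dF : nat -> vec -> R,
      (forall i, (i < n)%nat -> forall x, U x ->
         derivable_pt_lim (fun t => F (vadd x (vscale t (evec i)))) 0 (dF i x)) /\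
      (forall i, (i < n)%nat -> Ck n k' U (dF i))
  end.

Definition smooth_on (n : nat) (U : vec -> Prop) (F : vec -> R) : Prop :=
  forall k, Ck n k U F.

(* rho is smooth on the open subset Om of the submanifold S^m:
   locally it is the restriction of a smooth function on an open ball of R^(m+1). *)
Definition smooth_on_sphere (m : nat) (Om : vec -> Prop) (rho : vec -> R) : Prop :=
  forall p, Om p -> exists eps (F : vec -> R), 0 < eps /\
    smooth_on (S m) (balln (S m) p eps) F /\
    forall y, Om y -> distn (S m) p y < eps -> F y = rho y.

(* G is the gradient of rho on Om w.r.t. the round metric g0:
   G p is tangent at p and d rho_p(v) = <G p, v> for every tangent v,
   the derivative being taken along the curve t |-> (p + t v)/|p + t v| in S^m. *)
Definition sph_gradient (m : nat) (Om : vec -> Prop) (rho : vec -> R) (G : vec -> vec) : Prop :=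
  forall p, Om p ->
    inRn (S m) (G p) /\ dotn (S m) (G p) p = 0 /\
    forall v, inRn (S m) v -> dotn (S m) v p = 0 ->
      derivable_pt_lim
        (fun t => rho (vscale (/ normn (S m) (vadd p (vscale t v))) (vadd p (vscale t v))))
        0 (dotn (S m) (G p) v).

Definition proper_real (m : nat) (Om : vec -> Prop) (rho : vec -> R) : Prop :=
  forall K : R -> Prop, compact K -> compact_n (S m) (fun x => Om x /\ K (rho x)).

(* Hyperbolic space H^(m+1) in Minkowski space L^(m+2) (coordinate 0 timelike) *)
Definition lorentz (m : nat) (x y : vec) : R :=
  - x 0%nat * y 0%nat + sumR (S m) (fun i => x (S i) * y (S i)).

Definition hyperbolic (m : nat) (x : vec) : Prop :=
  inRn (S (S m)) x /\ lorentz m x x = -1 /\ 0 < x 0%nat.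

Definition assoc_map (m : nat) (rho : vec -> R) (G : vec -> vec) (x : vec) : vec :=
  let c := exp (rho x) / 2 *
           (1 + exp (-2 * rho x) * (1 + dotn (S m) (G x) (G x))) in
  fun j => match j with
           | O => c
           | S i => c * x i + exp (- rho x) * (- x i + G x i)
           end.

(* Properness of phi : Om -> H^(m+1) (H with the subspace topology of R^(m+2)) *)
Definition proper_to_hyp (m : nat) (Om : vec -> Prop) (phi : vec -> vec) : Prop :=
  forall K : vec -> Prop, (forall y, K y -> hyperbolic m y) -> compact_n (S (S m)) K ->
    compact_n (S m) (fun x => Om x /\ K (phi x)).

From Stdlib Require Import Reals List Lra Lia Psatz FunctionalExtensionality Classical.
Open Scope R_scope.

(* The time coordinate of phi(x) is
     e^rho/2 + e^(-rho) (1 + |grad rho|^2)/2 >= e^|rho| / 2,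
   so on the preimage of a compact K of H^(m+1) (where the time coordinate is
   bounded) rho is bounded, and this preimage lies in a compact sublevel set
   of |rho| since rho is proper.  It is closed there because phi is
   continuous: near each point rho extends to a C^1 function F on a ball of
   R^(m+1), and differentiating along the great-circle curves
   (x + t v)/|x + t v| shows that grad rho(x) is the tangential part
   grad F(x) - <grad F(x), x> x of the Euclidean gradient. *)

(** * Finite sums and the Euclidean distance *)

Lemma sumR_ext n f g : (forall i, (i < n)%nat -> f i = g i) -> sumR n f = sumR n g.
Proof.
induction n as [|n IH]; intros Hfg; simpl; auto.
rewrite IH, Hfg; auto; intros; apply Hfg; lia.
Qed.

Lemma sumR_add n f g : sumR n (fun i => f i + g i) = sumR n f + sumR n g.
Proof. induction n as [|n IH]; simpl; [ring | rewrite IH; ring]. Qed.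

Lemma sumR_scal n c f : sumR n (fun i => c * f i) = c * sumR n f.
Proof. induction n as [|n IH]; simpl; [ring | rewrite IH; ring]. Qed.

Lemma sumR_const n c : sumR n (fun _ => c) = INR n * c.
Proof. induction n as [|n IH]; simpl sumR; [simpl; ring | rewrite IH, S_INR; ring]. Qed.

Lemma sumR_le n f g : (forall i, (i < n)%nat -> f i <= g i) -> sumR n f <= sumR n g.
Proof.
induction n as [|n IH]; intros Hfg; simpl; [lra|].
assert (f n <= g n) by (apply Hfg; lia).
assert (sumR n f <= sumR n g) by (apply IH; intros; apply Hfg; lia).
lra.
Qed.

Lemma sumR_ge0 n f : (forall i, (i < n)%nat -> 0 <= f i) -> 0 <= sumR n f.
Proof. intros Hf. rewrite <- (Rmult_0_r (INR n)), <- sumR_const. apply sumR_le; auto. Qed.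

Lemma sumR_term_le n f j :
  (forall i, (i < n)%nat -> 0 <= f i) -> (j < n)%nat -> f j <= sumR n f.
Proof.
induction n as [|n IH]; intros Hf Hj; [lia|]; simpl.
destruct (Nat.eq_dec j n) as [->|Hjn].
- assert (0 <= sumR n f) by (apply sumR_ge0; intros; apply Hf; lia). lra.
- assert (f j <= sumR n f) by (apply IH; [intros; apply Hf; lia | lia]).
  assert (0 <= f n) by (apply Hf; lia). lra.
Qed.

Lemma Rabs_sumR_le n f : Rabs (sumR n f) <= sumR n (fun i => Rabs (f i)).
Proof.
induction n as [|n IH]; simpl; [rewrite Rabs_R0; lra|].
eapply Rle_trans; [apply Rabs_triang | lra].
Qed.

Lemma sumR_mul_evec n y j : (j < n)%nat -> sumR n (fun i => y i * evec j i) = y j.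
Proof.
induction n as [|n IH]; intros Hj; [lia|]; simpl; unfold evec at 2.
destruct (Nat.eqb_spec j n) as [->|Hjn].
- rewrite (sumR_ext n _ (fun _ => 0)), sumR_const; [ring|].
  intros i Hi; unfold evec; destruct (Nat.eqb_spec n i); [lia | ring].
- rewrite IH by lia; ring.
Qed.

Lemma sqrt_le_of_le_sqr X Y : 0 <= Y -> X <= Y * Y -> sqrt X <= Y.
Proof. intros. rewrite <- (sqrt_square Y) by auto. apply sqrt_le_1_alt; auto. Qed.

Lemma sumR_sqr_ge0 n a : 0 <= sumR n (fun i => a i ^ 2).
Proof. apply sumR_ge0; intros; apply pow2_ge_0. Qed.

Lemma minkowski n a b :
  sqrt (sumR n (fun i => (a i + b i) ^ 2))
  <= sqrt (sumR n (fun i => a i ^ 2)) + sqrt (sumR n (fun i => b i ^ 2)).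
Proof.
induction n as [|n IH]; [simpl; rewrite sqrt_0; lra|]; cbn [sumR].
set (S0 := sumR n (fun i => (a i + b i) ^ 2)) in *.
set (A := sumR n (fun i => a i ^ 2)) in *.
set (B := sumR n (fun i => b i ^ 2)) in *.
assert (HS : 0 <= S0) by apply sumR_sqr_ge0.
assert (HA : 0 <= A) by apply sumR_sqr_ge0.
assert (HB : 0 <= B) by apply sumR_sqr_ge0.
assert (HA' : 0 <= A + a n ^ 2) by (pose proof (pow2_ge_0 (a n)); lra).
assert (HB' : 0 <= B + b n ^ 2) by (pose proof (pow2_ge_0 (b n)); lra).
pose proof (sqrt_sqrt S0 HS); pose proof (sqrt_sqrt A HA); pose proof (sqrt_sqrt B HB).
pose proof (sqrt_sqrt _ HA'); pose proof (sqrt_sqrt _ HB').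
pose proof (sqrt_pos S0); pose proof (sqrt_pos A); pose proof (sqrt_pos B).
pose proof (sqrt_pos (A + a n ^ 2)); pose proof (sqrt_pos (B + b n ^ 2)).
set (u := sqrt A) in *; set (v := sqrt B) in *; set (s := sqrt S0) in *.
set (P := sqrt (A + a n ^ 2)) in *; set (Q := sqrt (B + b n ^ 2)) in *.
(* Cauchy-Schwarz for the two-term vectors (u, a n) and (v, b n) *)
assert (Hcs : u * v + a n * b n <= P * Q).
{ destruct (Rle_dec (u * v + a n * b n) 0); [nra|].
  apply Rsqr_incr_0_var; [|nra]; unfold Rsqr.
  replace (P * Q * (P * Q)) with ((u * u + a n ^ 2) * (v * v + b n ^ 2)) by nra.
  pose proof (pow2_ge_0 (u * b n - a n * v)); nra. }
apply sqrt_le_of_le_sqr; [lra|]. nra.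
Qed.

Lemma distn_ge0 n x y : 0 <= distn n x y.
Proof. apply sqrt_pos. Qed.

Lemma distn_sym n x y : distn n x y = distn n y x.
Proof. unfold distn; f_equal; apply sumR_ext; intros; ring. Qed.

Lemma distn_refl n x : distn n x x = 0.
Proof.
unfold distn; rewrite (sumR_ext n _ (fun _ => 0)) by (intros; ring).
rewrite sumR_const, Rmult_0_r; apply sqrt_0.
Qed.

Lemma distn_triangle n x y z : distn n x z <= distn n x y + distn n y z.
Proof.
unfold distn.
rewrite (sumR_ext n _ (fun i => ((x i - y i) + (y i - z i)) ^ 2)) by (intros; f_equal; ring).
apply minkowski.
Qed.

Lemma Rabs_coord_le_distn n x y i : (i < n)%nat -> Rabs (x i - y i) <= distn n x y.
Proof.
intros Hi; rewrite <- sqrt_Rsqr_abs; apply sqrt_le_1_alt; unfold Rsqr.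
replace ((x i - y i) * (x i - y i)) with ((x i - y i) ^ 2) by ring.
apply (sumR_term_le n (fun i => (x i - y i) ^ 2)); auto; intros; apply pow2_ge_0.
Qed.

Lemma sqrt_sumR_sqr_le n c : sqrt (sumR n (fun i => c i ^ 2)) <= sumR n (fun i => Rabs (c i)).
Proof.
induction n as [|n IH]; [simpl; rewrite sqrt_0; lra|]; cbn [sumR].
pose proof (sumR_sqr_ge0 n c) as HS.
set (T := sumR n (fun i => Rabs (c i))) in *.
assert (HT : 0 <= T) by (apply sumR_ge0; intros; apply Rabs_pos).
pose proof (sqrt_sqrt _ HS); pose proof (sqrt_pos (sumR n (fun i => c i ^ 2))).
pose proof (Rabs_pos (c n)); pose proof (pow2_abs (c n)).
assert (sumR n (fun i => c i ^ 2) <= T * T) by nra.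
apply sqrt_le_of_le_sqr; [lra|]. nra.
Qed.

Lemma distn_le_sum_Rabs n x y : distn n x y <= sumR n (fun i => Rabs (x i - y i)).
Proof. apply (sqrt_sumR_sqr_le n (fun i => x i - y i)). Qed.

Lemma distn_le_box n x y a :
  (forall i, (i < n)%nat -> Rabs (x i - y i) <= a) -> distn n x y <= INR n * a.
Proof.
intros H; eapply Rle_trans; [apply distn_le_sum_Rabs|].
rewrite <- sumR_const; apply sumR_le; auto.
Qed.

Lemma distn_eq0 n x y : inRn n x -> inRn n y -> distn n x y = 0 -> x = y.
Proof.
intros Hx Hy H0; extensionality i; destruct (Nat.lt_ge_cases i n) as [Hi|Hi].
- apply cond_eq; intros e He.
  pose proof (Rabs_coord_le_distn n x y i Hi); lra.
- rewrite Hx, Hy by auto; reflexivity.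
Qed.

(** * Continuity within a set *)

Section Continuity.

Variable n : nat.

Definition near (P : vec -> Prop) (x : vec) (Q : vec -> Prop) : Prop :=
  exists d, 0 < d /\ forall z, P z -> distn n x z < d -> Q z.

Definition cont_within (P : vec -> Prop) (x : vec) (f : vec -> R) : Prop :=
  forall e, 0 < e -> near P x (fun z => Rabs (f z - f x) < e).

Lemma near_mono P x (Q1 Q2 : vec -> Prop) :
  (forall z, P z -> Q1 z -> Q2 z) -> near P x Q1 -> near P x Q2.
Proof. intros H12 [d [Hd HQ]]; exists d; split; auto. Qed.

Lemma near_sub P P' x Q : (forall z, P' z -> P z) -> near P x Q -> near P' x Q.
Proof. intros HP [d [Hd HQ]]; exists d; split; auto. Qed.

Lemma near_and P x Q1 Q2 : near P x Q1 -> near P x Q2 -> near P x (fun z => Q1 z /\ Q2 z).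
Proof.
intros [d1 [Hd1 H1]] [d2 [Hd2 H2]]; exists (Rmin d1 d2); split; [now apply Rmin_glb_lt|].
intros z Pz Hz; pose proof (Rmin_l d1 d2); pose proof (Rmin_r d1 d2).
split; [apply H1 | apply H2]; auto; lra.
Qed.

Lemma near_forall_lt P x k (Q : nat -> vec -> Prop) :
  (forall i, (i < k)%nat -> near P x (Q i)) -> near P x (fun z => forall i, (i < k)%nat -> Q i z).
Proof.
induction k as [|k IH]; intros HQ.
- exists 1; split; [lra | intros; lia].
- apply (near_mono _ _ (fun z => (forall i, (i < k)%nat -> Q i z) /\ Q k z)).
  + intros z _ [Hlt Hk] i Hi; destruct (Nat.eq_dec i k) as [->|]; auto; apply Hlt; lia.
  + apply near_and; [apply IH; intros; apply HQ; lia | apply HQ; lia].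
Qed.

Lemma near_ball P x eps :
  0 < eps -> (forall z, P z -> inRn n z) -> near P x (balln n x eps).
Proof. intros Heps HP; exists eps; split; auto; split; auto. Qed.

Lemma Ck0_cont_within U f x : Ck n 0 U f -> U x -> cont_within U x f.
Proof. intros Hf Ux e He; exact (Hf x Ux e He). Qed.

Lemma cont_within_sub P U x f : near P x U -> cont_within U x f -> cont_within P x f.
Proof.
intros HPU Hf e He; apply (near_mono _ _ (fun z => U z /\ Rabs (f z - f x) < e)).
- intros z _ [_ Hz]; exact Hz.
- destruct (Hf e He) as [d [Hd H]]; destruct HPU as [d' [Hd' H']].
  exists (Rmin d d'); split; [now apply Rmin_glb_lt|].
  intros z Pz Hz; pose proof (Rmin_l d d'); pose proof (Rmin_r d d').
  assert (U z) by (apply H'; auto; lra); split; auto; apply H; auto; lra.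
Qed.

Lemma cont_within_local_ext P x f g :
  near P x (fun z => f z = g z) -> P x -> cont_within P x g -> cont_within P x f.
Proof.
intros Hfg Px Hg e He; apply (near_mono _ _ (fun z => f z = g z /\ Rabs (g z - g x) < e)).
- intros z _ [-> Hz]; destruct Hfg as [d [Hd Hfg]].
  rewrite (Hfg x Px) by (rewrite distn_refl; auto); exact Hz.
- apply near_and; auto.
Qed.

Lemma cont_within_const P x c : cont_within P x (fun _ => c).
Proof.
intros e He; exists 1; split; [lra|]; intros.
rewrite Rminus_diag, Rabs_R0; auto.
Qed.

Lemma cont_within_coord P x i : (i < n)%nat -> cont_within P x (fun z => z i).
Proof.
intros Hi e He; exists e; split; auto; intros z _ Hz.
rewrite Rabs_minus_sym; pose proof (Rabs_coord_le_distn n x z i Hi); lra.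
Qed.

Lemma cont_within_plus P x f g :
  cont_within P x f -> cont_within P x g -> cont_within P x (fun z => f z + g z).
Proof.
intros Hf Hg e He; apply (near_mono _ _ (fun z => Rabs (f z - f x) < e / 2 /\ Rabs (g z - g x) < e / 2)).
- intros z _ [H1 H2].
  replace (f z + g z - (f x + g x)) with ((f z - f x) + (g z - g x)) by ring.
  eapply Rle_lt_trans; [apply Rabs_triang | lra].
- apply near_and; [apply Hf | apply Hg]; lra.
Qed.

Lemma cont_within_opp P x f : cont_within P x f -> cont_within P x (fun z => - f z).
Proof.
intros Hf e He; apply (near_mono _ _ (fun z => Rabs (f z - f x) < e)).
- intros z _ Hz; replace (- f z - - f x) with (- (f z - f x)) by ring; rewrite Rabs_Ropp; exact Hz.
- apply Hf; exact He.
Qed.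

Lemma Rabs_mul_sub_le a b a0 b0 :
  Rabs (a * b - a0 * b0)
  <= Rabs (a - a0) * Rabs (b - b0) + Rabs a0 * Rabs (b - b0) + Rabs b0 * Rabs (a - a0).
Proof.
replace (a * b - a0 * b0) with ((a - a0) * (b - b0) + a0 * (b - b0) + b0 * (a - a0)) by ring.
rewrite <- !Rabs_mult; eapply Rle_trans; [apply Rabs_triang|].
apply Rplus_le_compat_r, Rabs_triang.
Qed.

Lemma cont_within_mult P x f g :
  cont_within P x f -> cont_within P x g -> cont_within P x (fun z => f z * g z).
Proof.
intros Hf Hg e He.
set (a := Rabs (f x)); set (b := Rabs (g x)).
assert (Ha : 0 <= a) by apply Rabs_pos; assert (Hb : 0 <= b) by apply Rabs_pos.
set (eta := Rmin 1 (e / (2 * (1 + a + b)))).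
assert (Heta : 0 < eta) by (apply Rmin_glb_lt; [lra | apply Rdiv_lt_0_compat; lra]).
assert (Heta1 : eta <= 1) by apply Rmin_l.
assert (Hetae : eta * (1 + a + b) <= e / 2).
{ apply (Rle_trans _ (e / (2 * (1 + a + b)) * (1 + a + b))).
  - apply Rmult_le_compat_r; [lra | apply Rmin_r].
  - right; field; lra. }
apply (near_mono _ _ (fun z => Rabs (f z - f x) < eta /\ Rabs (g z - g x) < eta)).
- intros z _ [H1 H2]; eapply Rle_lt_trans; [apply Rabs_mul_sub_le|]; fold a b.
  pose proof (Rabs_pos (f z - f x)); pose proof (Rabs_pos (g z - g x)).
  assert (Rabs (f z - f x) * Rabs (g z - g x) <= eta) by nra.
  assert (a * Rabs (g z - g x) <= a * eta) by nra.
  assert (b * Rabs (f z - f x) <= b * eta) by nra.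
  nra.
- apply near_and; auto.
Qed.

Lemma cont_within_comp P x f g :
  continuity_pt g (f x) -> cont_within P x f -> cont_within P x (fun z => g (f z)).
Proof.
intros Hg Hf e He; destruct (Hg e He) as [al [Hal Hh]].
apply (near_mono _ _ (fun z => Rabs (f z - f x) < al)); [|apply Hf; exact Hal].
intros z _ Hz; destruct (Req_dec (f z) (f x)) as [E|E].
- rewrite E, Rminus_diag, Rabs_R0; auto.
- apply (Hh (f z)); split; [split; [exact I | auto] | exact Hz].
Qed.

Lemma cont_within_sumR P x k (f : nat -> vec -> R) :
  (forall i, (i < k)%nat -> cont_within P x (f i)) -> cont_within P x (fun z => sumR k (fun i => f i z)).
Proof.
induction k as [|k IH]; intros Hf; [exact (cont_within_const P x 0)|].
apply (cont_within_plus _ _ (fun z => sumR k (fun i => f i z)) (f k)).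
- apply IH; intros; apply Hf; lia.
- apply Hf; lia.
Qed.

End Continuity.

Lemma cont_within_distn n N P x (F : vec -> vec) :
  (forall j, (j < N)%nat -> cont_within n P x (fun z => F z j)) ->
  forall e, 0 < e -> near n P x (fun z => distn N (F x) (F z) < e).
Proof.
intros HF e He; pose proof (pos_INR N).
set (eta := e / (INR N + 1)).
assert (Heta : 0 < eta) by (apply Rdiv_lt_0_compat; lra).
assert (HNe : INR N * eta < e).
{ assert ((INR N + 1) * eta = e) by (unfold eta; field; lra). nra. }
apply (near_mono _ _ _ (fun z => forall j, (j < N)%nat -> Rabs (F z j - F x j) < eta)).
- intros z _ Hz; eapply Rle_lt_trans; [|exact HNe].
  apply distn_le_box; intros j Hj; rewrite Rabs_minus_sym; left; auto.
- apply near_forall_lt; intros j Hj; apply HF; auto.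
Qed.

(** * Compactness *)

Section Compactness.

Variable n : nat.

Lemma compact_n_closed_subset (C S : vec -> Prop) :
  compact_n n C -> (forall x, S x -> C x) ->
  (forall x, C x -> ~ S x -> near n S x (fun _ => False)) -> compact_n n S.
Proof.
intros [HCin HC] HSC Hout; split; [intros; apply HCin, HSC; auto|].
intros I U HUo Hcov.
(* cover C by the U i together with balls around points of C \ S that miss S *)
set (U' := fun j : I + vec => match j with
  | inl i => U i
  | inr x => fun z => exists r, 0 < r /\ (forall w, S w -> distn n x w < r -> False) /\ balln n x r z
  end).
destruct (HC (I + vec)%type U') as [l Hl].
- intros [i|x]; simpl; [apply HUo|].
  intros z [r [Hr [Hw [Hzin Hzd]]]]; exists (r - distn n x z); split; [lra|].
  intros y [Hyin Hyd]; exists r; repeat split; auto.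
  pose proof (distn_triangle n x z y); lra.
- intros x Hx; destruct (classic (S x)) as [Sx|nSx].
  + destruct (Hcov x Sx) as [i Hi]; exists (inl i); auto.
  + destruct (Hout x Hx nSx) as [r [Hr Hw]]; exists (inr x); simpl.
    exists r; repeat split; auto; rewrite distn_refl; auto.
- exists (flat_map (fun j => match j with inl i => i :: nil | inr _ => nil end) l).
  intros x Sx; destruct (Hl x (HSC x Sx)) as [[i|y] [Hin Hu]].
  + exists i; split; auto; apply in_flat_map; exists (inl i); simpl; auto.
  + destruct Hu as [r [_ [Hw [_ Hd]]]]; destruct (Hw x Sx Hd).
Qed.

Lemma compact_n_coord_bounded K i :
  compact_n n K -> (i < n)%nat -> exists M, forall z, K z -> z i < M.
Proof.
intros [HKin HK] Hi; destruct (HK R (fun r z => z i < r)) as [l Hl].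
- intros r z Hz; exists (r - z i); split; [lra|]; intros y [_ Hy].
  pose proof (Rabs_coord_le_distn n z y i Hi); pose proof (Rle_abs (y i - z i)).
  rewrite (Rabs_minus_sym (y i)) in *; lra.
- intros z _; exists (z i + 1); lra.
- exists (fold_right Rmax 0 l); intros z Hz; destruct (Hl z Hz) as [r [Hr Hzr]].
  enough (r <= fold_right Rmax 0 l) by lra.
  clear Hl; induction l as [|r' l IH]; simpl in *; [contradiction|].
  destruct Hr as [->|Hr]; [apply Rmax_l | eapply Rle_trans; [apply IH; auto | apply Rmax_r]].
Qed.

Lemma compact_n_dist_pos K y :
  compact_n n K -> inRn n y -> ~ K y -> exists r, 0 < r /\ forall z, K z -> r <= distn n y z.
Proof.
intros [HKin HK] Hy Hny.
destruct (HK {r : R | 0 < r} (fun r z => proj1_sig r < distn n y z)) as [l Hl].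
- intros [r Hr] z Hz; simpl in *; exists (distn n y z - r); split; [lra|].
  intros w [_ Hw]; pose proof (distn_triangle n y w z); rewrite (distn_sym n w z) in *; lra.
- intros z Hz; assert (Hpos : 0 < distn n y z / 2).
  { destruct (distn_ge0 n y z) as [Hd|Hd]; [lra|].
    exfalso; apply Hny; rewrite (distn_eq0 n y z); auto. }
  exists (exist _ _ Hpos); simpl; lra.
- set (r0 := fold_right Rmin 1 (map (@proj1_sig _ _) l)).
  assert (Hpos : 0 < r0).
  { unfold r0; clear Hl; induction l as [|[r Hr] l IH]; simpl; [lra | apply Rmin_glb_lt; auto]. }
  assert (Hle : forall r, In r l -> r0 <= proj1_sig r).
  { unfold r0; clear Hl Hpos r0; induction l as [|r' l IH]; simpl; intros r Hr; [contradiction|].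
    destruct Hr as [->|Hr]; [apply Rmin_l | eapply Rle_trans; [apply Rmin_r | apply IH; auto]]. }
  exists r0; split; auto; intros z Hz; destruct (Hl z Hz) as [r [Hr Hzr]].
  pose proof (Hle r Hr); lra.
Qed.

End Compactness.

Lemma cont_within_preimage_avoids n N P K (F : vec -> vec) x :
  compact_n N K -> inRn N (F x) -> ~ K (F x) ->
  (forall j, (j < N)%nat -> cont_within n P x (fun z => F z j)) ->
  near n P x (fun z => ~ K (F z)).
Proof.
intros HK HFx HnK HF; destruct (compact_n_dist_pos N K (F x) HK HFx HnK) as [r [Hr Hrk]].
apply (near_mono _ _ _ (fun z => distn N (F x) (F z) < r)); [|apply cont_within_distn; auto].
intros z _ Hz HKz; pose proof (Hrk _ HKz); lra.
Qed.

(** * First-order expansion of C^1 functions *)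

Lemma mean_value_Rabs g g' a :
  (forall c, Rabs c <= Rabs a -> derivable_pt_lim g c (g' c)) ->
  exists c, Rabs c <= Rabs a /\ g a - g 0 = g' c * a.
Proof.
intros Hd; destruct (Rtotal_order a 0) as [Ha|[->|Ha]].
- destruct (MVT_cor2 g g' a 0 Ha) as [c [Hc1 Hc2]].
  { intros c Hc; apply Hd; rewrite !Rabs_left1; lra. }
  exists c; split; [rewrite !Rabs_left1; lra | lra].
- exists 0; split; [right; auto | ring].
- destruct (MVT_cor2 g g' 0 a Ha) as [c [Hc1 Hc2]].
  { intros c Hc; apply Hd; rewrite !Rabs_pos_eq; lra. }
  exists c; split; [rewrite !Rabs_pos_eq; lra | lra].
Qed.

Definition vtrunc (k : nat) (h : vec) : vec := fun j => if Nat.ltb j k then h j else 0.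

Section FirstOrderExpansion.

Variables (n : nat) (p : vec) (eps : R) (F : vec -> R) (dF : nat -> vec -> R).
Hypothesis Hpart : forall i, (i < n)%nat -> forall x, balln n p eps x ->
  derivable_pt_lim (fun t => F (vadd x (vscale t (evec i)))) 0 (dF i x).
Hypothesis Hcont : forall i, (i < n)%nat -> Ck n 0 (balln n p eps) (dF i).

Lemma coord_mean_value z k a : (k < n)%nat ->
  (forall c, Rabs c <= Rabs a -> balln n p eps (vadd z (vscale c (evec k)))) ->
  exists c, Rabs c <= Rabs a /\
    F (vadd z (vscale a (evec k))) - F z = dF k (vadd z (vscale c (evec k))) * a.
Proof.
intros Hk Hseg.
replace (F z) with (F (vadd z (vscale 0 (evec k)))) by (f_equal; extensionality j; unfold vadd, vscale; ring).
apply (mean_value_Rabs (fun t => F (vadd z (vscale t (evec k))))).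
intros c Hc eta Heta.
destruct (Hpart k Hk _ (Hseg c Hc) eta Heta) as [del Hdel].
exists del; intros h Hh Hhd; specialize (Hdel h Hh Hhd).
replace (vadd z (vscale (c + h) (evec k))) with (vadd (vadd z (vscale c (evec k))) (vscale (0 + h) (evec k)))
  by (extensionality j; unfold vadd, vscale; ring).
replace (vadd z (vscale c (evec k))) with (vadd (vadd z (vscale c (evec k))) (vscale 0 (evec k))) at 2
  by (extensionality j; unfold vadd, vscale; ring).
exact Hdel.
Qed.

Lemma partials_oscillation_small x : balln n p eps x -> forall e, 0 < e ->
  exists d, 0 < d /\ forall w, inRn n w -> (forall i, (i < n)%nat -> Rabs (w i - x i) < d) ->
    balln n p eps w /\ forall i, (i < n)%nat -> Rabs (dF i w - dF i x) < e.
Proof.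
intros [Hxin Hxd] e He.
destruct (near_forall_lt n (balln n p eps) x n (fun i y => Rabs (dF i y - dF i x) < e)) as [dl [Hdl Hosc]].
{ intros i Hi; apply (Ck0_cont_within n); [apply Hcont; auto | split; auto | exact He]. }
set (r := Rmin dl (eps - distn n p x)).
assert (Hr : 0 < r) by (apply Rmin_glb_lt; lra).
assert (r <= dl) by apply Rmin_l; assert (r <= eps - distn n p x) by apply Rmin_r.
pose proof (pos_INR n).
exists (r / (INR n + 1)); split; [apply Rdiv_lt_0_compat; lra|]; intros w Hw Hwx.
assert (Hdist : distn n x w < r).
{ eapply Rle_lt_trans; [apply (distn_le_box _ _ _ (r / (INR n + 1)))|].
  - intros i Hi; rewrite Rabs_minus_sym; left; auto.
  - assert ((INR n + 1) * (r / (INR n + 1)) = r) by (field; lra); nra. }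
assert (Hball : balln n p eps w) by (split; auto; pose proof (distn_triangle n p x w); lra).
split; auto; apply Hosc; auto; lra.
Qed.

(* Moving from x to x + h one coordinate at a time, the mean value theorem
   bounds each step by the oscillation of the corresponding partial derivative. *)
Lemma first_order_expansion x : balln n p eps x ->
  forall e, 0 < e -> exists d, 0 < d /\ forall h, inRn n h -> (forall i, (i < n)%nat -> Rabs (h i) < d) ->
    Rabs (F (vadd x h) - F x - sumR n (fun i => dF i x * h i)) <= e * sumR n (fun i => Rabs (h i)).
Proof.
intros Hx e He; destruct (partials_oscillation_small x Hx e He) as [d [Hd Hbox]].
destruct Hx as [Hxin _].
exists d; split; auto; intros h Hh Hhd.
assert (Hstep : forall k, (k <= n)%nat ->
  Rabs (F (vadd x (vtrunc k h)) - F x - sumR k (fun i => dF i x * h i)) <= e * sumR k (fun i => Rabs (h i))).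
{ induction k as [|k IH]; intros Hk.
  - replace (vadd x (vtrunc 0 h)) with x by (extensionality j; unfold vadd, vtrunc; simpl; ring).
    simpl; rewrite Rminus_diag, Rminus_0_r, Rabs_R0; lra.
  - set (z := vadd x (vtrunc k h)).
    replace (vadd x (vtrunc (S k) h)) with (vadd z (vscale (h k) (evec k))).
    2: { extensionality j; unfold z, vadd, vscale, vtrunc, evec.
         destruct (Nat.ltb_spec j (S k)), (Nat.ltb_spec j k), (Nat.eqb_spec k j); subst; try lia; ring. }
    assert (Hseg : forall c, Rabs c <= Rabs (h k) -> inRn n (vadd z (vscale c (evec k))) /\
              forall i, (i < n)%nat -> Rabs (vadd z (vscale c (evec k)) i - x i) < d).
    { intros c Hc; split.
      - intros i Hi; unfold z, vadd, vscale, vtrunc, evec; rewrite Hxin by auto.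
        destruct (Nat.ltb_spec i k), (Nat.eqb_spec k i); try lia; ring.
      - intros i Hi; pose proof (Hhd i Hi); pose proof (Hhd k ltac:(lia)).
        unfold z, vadd, vscale, vtrunc, evec.
        destruct (Nat.ltb_spec i k), (Nat.eqb_spec k i); subst; try lia;
          [replace (x i + h i + c * 0 - x i) with (h i) by ring
          | replace (x i + 0 + c * 1 - x i) with c by ring
          | replace (x i + 0 + c * 0 - x i) with 0 by ring; rewrite Rabs_R0]; lra. }
    destruct (coord_mean_value z k (h k) ltac:(lia)) as [c [Hc Hmv]].
    { intros c Hc; destruct (Hseg c Hc) as [Hin Hnear]; apply Hbox; auto. }
    destruct (Hseg c Hc) as [Hin Hnear].
    pose proof (proj2 (Hbox _ Hin Hnear) k ltac:(lia)) as Hosck.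
    specialize (IH ltac:(lia)); fold z in IH; cbn [sumR].
    replace (F (vadd z (vscale (h k) (evec k))) - F x - (sumR k (fun i => dF i x * h i) + dF k x * h k))
      with ((F z - F x - sumR k (fun i => dF i x * h i))
            + (dF k (vadd z (vscale c (evec k))) - dF k x) * h k) by lra.
    eapply Rle_trans; [apply Rabs_triang|]; rewrite Rabs_mult.
    assert (Rabs (dF k (vadd z (vscale c (evec k))) - dF k x) * Rabs (h k) <= e * Rabs (h k))
      by (apply Rmult_le_compat_r; [apply Rabs_pos | lra]).
    lra. }
replace h with (vtrunc n h) at 1 by (extensionality j; unfold vtrunc; destruct (Nat.ltb_spec j n); auto; rewrite Hh by lia; reflexivity).
apply Hstep; lia.
Qed.

End FirstOrderExpansion.

(** * Derivatives along curves on the sphere *)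

Lemma Rabs_div_le X K t : t <> 0 -> Rabs X <= K * Rabs t -> Rabs (X / t) <= K.
Proof.
intros Ht H; unfold Rdiv; rewrite Rabs_mult, Rabs_inv.
assert (0 < Rabs t) by (apply Rabs_pos_lt; auto).
apply (Rmult_le_reg_r (Rabs t)); auto; rewrite Rmult_assoc, Rinv_l; lra.
Qed.

Section CurveDerivative.

(* A curve x + h t through x with velocity v at t = 0, up to a quadratic error. *)
Variables (n : nat) (h : R -> vec) (v : vec) (C : R).
Hypothesis Hh : forall t, inRn n (h t).
Hypothesis HC : 0 <= C.
Hypothesis Hsecond : forall t, Rabs t <= 1 -> forall i, (i < n)%nat -> Rabs (h t i - t * v i) <= C * (t * t).

Let B := C + sumR n (fun i => Rabs (v i)).

Lemma curve_first_order t : Rabs t <= 1 -> forall i, (i < n)%nat -> Rabs (h t i) <= B * Rabs t.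
Proof.
intros Ht i Hi.
assert (Hv : Rabs (v i) <= sumR n (fun i => Rabs (v i)))
  by (apply (sumR_term_le n (fun i => Rabs (v i))); auto; intros; apply Rabs_pos).
pose proof (Rsqr_abs t); unfold Rsqr in *; pose proof (Rabs_pos t); pose proof (Rabs_pos (v i)).
pose proof (Hsecond t Ht i Hi).
replace (h t i) with ((h t i - t * v i) + t * v i) by ring.
assert (C * (t * t) <= C * Rabs t) by (apply Rmult_le_compat_l; nra).
assert (Rabs t * Rabs (v i) <= Rabs t * sumR n (fun i => Rabs (v i))) by (apply Rmult_le_compat_l; auto).
eapply Rle_trans; [apply Rabs_triang|]; rewrite Rabs_mult; unfold B; lra.
Qed.

Lemma curve_at_0 : h 0 = fun _ => 0.
Proof.
extensionality i; destruct (Nat.lt_ge_cases i n) as [Hi|Hi]; [|apply Hh; auto].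
pose proof (Hsecond 0 ltac:(rewrite Rabs_R0; lra) i Hi) as H0.
apply cond_eq; intros e He; rewrite Rminus_0_r; revert H0.
replace (h 0 i - 0 * v i) with (h 0 i) by ring; lra.
Qed.

Lemma curve_distn_small x r : 0 < r -> exists d, 0 < d /\ forall t, Rabs t < d -> distn n x (vadd x (h t)) < r.
Proof.
intros Hr; pose proof (pos_INR n).
assert (HB : 0 <= B) by (apply Rplus_le_le_0_compat; auto; apply sumR_ge0; intros; apply Rabs_pos).
exists (Rmin 1 (r / (INR n * B + 1))); split; [apply Rmin_glb_lt; [lra | apply Rdiv_lt_0_compat; nra]|].
intros t Ht; pose proof (Rmin_l 1 (r / (INR n * B + 1))); pose proof (Rmin_r 1 (r / (INR n * B + 1))).
apply (Rle_lt_trans _ (INR n * (B * Rabs t))).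
- apply distn_le_box; intros i Hi; unfold vadd.
  replace (x i - (x i + h t i)) with (- h t i) by ring; rewrite Rabs_Ropp; apply curve_first_order; [lra | auto].
- assert ((INR n * B + 1) * (r / (INR n * B + 1)) = r) by (field; nra).
  pose proof (Rabs_pos t); nra.
Qed.

Lemma derivable_pt_lim_along_curve (F : vec -> R) (L : nat -> R) x :
  (forall e, 0 < e -> exists d, 0 < d /\ forall k, inRn n k -> (forall i, (i < n)%nat -> Rabs (k i) < d) ->
     Rabs (F (vadd x k) - F x - sumR n (fun i => L i * k i)) <= e * sumR n (fun i => Rabs (k i))) ->
  derivable_pt_lim (fun t => F (vadd x (h t))) 0 (sumR n (fun i => L i * v i)).
Proof.
intros Hexp eps0 Heps0.
assert (HB : 0 <= B) by (apply Rplus_le_le_0_compat; auto; apply sumR_ge0; intros; apply Rabs_pos).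
set (D := sumR n (fun i => Rabs (L i))).
assert (HD : 0 <= D) by (apply sumR_ge0; intros; apply Rabs_pos).
set (N := INR n); assert (HN : 0 <= N) by apply pos_INR.
set (et := eps0 / (2 * (N * B + 1))).
assert (Het : 0 < et) by (apply Rdiv_lt_0_compat; nra).
destruct (Hexp et Het) as [dt [Hdt Hexpt]].
set (delta := Rmin 1 (Rmin (dt / (B + 1)) (eps0 / (2 * (D * C + 1))))).
assert (Hdelta : 0 < delta) by (repeat apply Rmin_glb_lt; try lra; apply Rdiv_lt_0_compat; nra).
exists (mkposreal delta Hdelta); intros t Ht0 Htd; simpl in Htd.
assert (Ht1 : Rabs t <= 1) by (left; eapply Rlt_le_trans; [exact Htd | apply Rmin_l]).
assert (Ht2 : (B + 1) * Rabs t < dt).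
{ assert (Rabs t < dt / (B + 1))
    by (eapply Rlt_le_trans; [exact Htd | eapply Rle_trans; [apply Rmin_r | apply Rmin_l]]).
  apply (Rmult_lt_compat_l (B + 1)) in H; [|lra].
  replace ((B + 1) * (dt / (B + 1))) with dt in H by (field; lra); exact H. }
assert (Ht3 : (D * C + 1) * Rabs t < eps0 / 2).
{ assert (Rabs t < eps0 / (2 * (D * C + 1)))
    by (eapply Rlt_le_trans; [exact Htd | eapply Rle_trans; [apply Rmin_r | apply Rmin_r]]).
  apply (Rmult_lt_compat_l (D * C + 1)) in H; [|nra].
  replace ((D * C + 1) * (eps0 / (2 * (D * C + 1)))) with (eps0 / 2) in H by (field; nra); exact H. }
assert (Htpos : 0 < Rabs t) by (apply Rabs_pos_lt; auto).
assert (Hht : forall i, (i < n)%nat -> Rabs (h t i) <= B * Rabs t) by (apply curve_first_order; auto).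
replace (vadd x (h 0)) with x by (rewrite curve_at_0; extensionality j; unfold vadd; ring).
rewrite Rplus_0_l.
set (T1 := F (vadd x (h t)) - F x - sumR n (fun i => L i * h t i)).
set (T2 := sumR n (fun i => L i * (h t i - t * v i))).
replace ((F (vadd x (h t)) - F x) / t - sumR n (fun i => L i * v i)) with (T1 / t + T2 / t).
2: { unfold T1, T2; rewrite (sumR_ext n (fun i => L i * (h t i - t * v i)) (fun i => L i * h t i + (- t) * (L i * v i))) by (intros; ring).
     rewrite sumR_add, sumR_scal; field; auto. }
assert (HT1 : Rabs (T1 / t) <= et * (N * B)).
{ apply Rabs_div_le; auto.
  eapply Rle_trans; [apply Hexpt; auto; intros i Hi; pose proof (Hht i Hi); nra|].
  rewrite Rmult_assoc; apply Rmult_le_compat_l; [lra|].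
  unfold N; rewrite Rmult_assoc, <- sumR_const; apply sumR_le; auto. }
assert (HT2 : Rabs (T2 / t) <= D * C * Rabs t).
{ apply Rabs_div_le; auto.
  eapply Rle_trans; [apply Rabs_sumR_le|].
  apply (Rle_trans _ (sumR n (fun i => Rabs (L i) * (C * (t * t))))).
  - apply sumR_le; intros i Hi; rewrite Rabs_mult.
    apply Rmult_le_compat_l; [apply Rabs_pos | apply Hsecond; auto].
  - pose proof (Rsqr_abs t); unfold Rsqr in *.
    rewrite (sumR_ext n _ (fun i => (C * (t * t)) * Rabs (L i))) by (intros; ring).
    rewrite sumR_scal; fold D; right; nra. }
assert (et * (N * B) < eps0 / 2).
{ unfold et; apply (Rmult_lt_reg_r (2 * (N * B + 1))); [nra|].
  field_simplify; nra. }
eapply Rle_lt_trans; [apply Rabs_triang|].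
assert (D * C * Rabs t < eps0 / 2) by nra.
lra.
Qed.

End CurveDerivative.

Definition sph_curve (m : nat) (x v : vec) (t : R) : vec :=
  vscale (/ normn (S m) (vadd x (vscale t v))) (vadd x (vscale t v)).

Section SphereCurve.

Variables (m : nat) (x v : vec).
Hypotheses (Hx : sphere m x) (Hv : inRn (S m) v) (Hvx : dotn (S m) v x = 0).

Let a := dotn (S m) v v.
Let s t := sqrt (1 + t * t * a).

Lemma sph_curve_normsq t : dotn (S m) (vadd x (vscale t v)) (vadd x (vscale t v)) = 1 + t * t * a.
Proof.
destruct Hx as [_ Hxx]; unfold dotn in *.
rewrite (sumR_ext _ _ (fun i => (x i * x i + (2 * t) * (v i * x i)) + (t * t) * (v i * v i)))
  by (intros; unfold vadd, vscale; ring).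
rewrite !sumR_add, !sumR_scal, Hxx; unfold a, dotn in *; rewrite Hvx; ring.
Qed.

Lemma sph_curve_scale_ge1 t : 1 <= s t /\ s t * s t = 1 + t * t * a.
Proof.
assert (0 <= a) by (apply sumR_ge0; intros; apply Rle_0_sqr).
assert (0 <= t * t * a) by (apply Rmult_le_pos; [apply Rle_0_sqr | auto]).
split; [rewrite <- sqrt_1; apply sqrt_le_1_alt; lra | apply sqrt_sqrt; lra].
Qed.

Lemma sph_curve_coord t i : sph_curve m x v t i = (x i + t * v i) / s t.
Proof.
unfold sph_curve, normn, s; rewrite sph_curve_normsq; unfold vscale, vadd, Rdiv; ring.
Qed.

Lemma sph_curve_sphere t : sphere m (sph_curve m x v t).
Proof.
destruct Hx as [Hxin _]; destruct (sph_curve_scale_ge1 t) as [Hs1 Hss]; split.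
- intros i Hi; rewrite sph_curve_coord, Hxin, Hv by auto; unfold Rdiv; ring.
- unfold dotn; rewrite (sumR_ext _ _ (fun i => / (s t * s t) *
      (vadd x (vscale t v) i * vadd x (vscale t v) i))).
  + rewrite sumR_scal; fold (dotn (S m) (vadd x (vscale t v)) (vadd x (vscale t v))).
    rewrite sph_curve_normsq, <- Hss; field; lra.
  + intros i Hi; rewrite sph_curve_coord; unfold vadd, vscale; field; lra.
Qed.

Lemma sph_curve_second_order : exists C, 0 <= C /\ forall t, Rabs t <= 1 -> forall i, (i < S m)%nat ->
  Rabs (sph_curve m x v t i - x i - t * v i) <= C * (t * t).
Proof.
destruct Hx as [Hxin Hxx].
assert (Ha : 0 <= a) by (apply sumR_ge0; intros; apply Rle_0_sqr).
assert (Hxi : forall i, (i < S m)%nat -> Rabs (x i) <= 1).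
{ intros i Hi; assert (x i * x i <= 1)
    by (rewrite <- Hxx; apply (sumR_term_le _ (fun i => x i * x i)); auto; intros; nra).
  pose proof (Rsqr_abs (x i)); unfold Rsqr in *; pose proof (Rabs_pos (x i)); nra. }
assert (Hvi : forall i, (i < S m)%nat -> Rabs (v i) <= 1 + a).
{ intros i Hi; assert (v i * v i <= a)
    by (apply (sumR_term_le _ (fun i => v i * v i)); auto; intros; nra).
  pose proof (Rsqr_abs (v i)); unfold Rsqr in *; pose proof (Rabs_pos (v i)); nra. }
exists ((2 + a) * a); split; [nra|]; intros t Ht i Hi.
destruct (sph_curve_scale_ge1 t) as [Hs1 Hss].
(* |x + t v| <= 2 + a, and 0 <= 1 - 1/s <= s^2 - 1 = t^2 a *)
rewrite sph_curve_coord.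
replace ((x i + t * v i) / s t - x i - t * v i) with ((x i + t * v i) * (1 / s t - 1)) by (field; lra).
rewrite Rabs_mult.
assert (Rabs (x i + t * v i) <= 2 + a).
{ eapply Rle_trans; [apply Rabs_triang|]; rewrite Rabs_mult.
  pose proof (Hxi i Hi); pose proof (Hvi i Hi); pose proof (Rabs_pos t); pose proof (Rabs_pos (v i)).
  assert (Rabs t * Rabs (v i) <= 1 * (1 + a)) by (apply Rmult_le_compat; auto). lra. }
assert (Rabs (1 / s t - 1) <= t * t * a).
{ replace (1 / s t - 1) with (- ((s t - 1) / s t)) by (field; lra).
  rewrite Rabs_Ropp, Rabs_pos_eq
    by (unfold Rdiv; apply Rmult_le_pos; [lra | left; apply Rinv_0_lt_compat; lra]).
  apply (Rmult_le_reg_r (s t)); [lra|]; unfold Rdiv; rewrite Rmult_assoc, Rinv_l by lra; nra. }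
replace ((2 + a) * a * (t * t)) with ((2 + a) * (t * t * a)) by ring.
apply Rmult_le_compat; auto; apply Rabs_pos.
Qed.

End SphereCurve.

Section SphericalGradient.

Variables (m : nat) (Om : vec -> Prop) (rho : vec -> R) (G : vec -> vec).
Hypothesis Hos : open_in_sphere m Om.
Hypothesis Hgrad : sph_gradient m Om rho G.

Variables (p : vec) (eps : R) (F : vec -> R) (dF : nat -> vec -> R).
Hypothesis HF : forall y, Om y -> distn (S m) p y < eps -> F y = rho y.
Hypothesis Hpart : forall i, (i < S m)%nat -> forall x, balln (S m) p eps x ->
  derivable_pt_lim (fun t => F (vadd x (vscale t (evec i)))) 0 (dF i x).
Hypothesis Hcont : forall i, (i < S m)%nat -> Ck (S m) 0 (balln (S m) p eps) (dF i).

Lemma sph_curve_deriv x v : Om x -> distn (S m) p x < eps ->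
  inRn (S m) v -> dotn (S m) v x = 0 ->
  derivable_pt_lim (fun t => rho (sph_curve m x v t)) 0 (sumR (S m) (fun i => dF i x * v i)).
Proof.
intros Hx Hpx Hv Hvx.
destruct (Hos x Hx) as [Hxs [ex [Hex Hexo]]].
set (h := fun t i => sph_curve m x v t i - x i).
assert (Hcurve : forall t, vadd x (h t) = sph_curve m x v t)
  by (intros t; extensionality i; unfold vadd, h; ring).
assert (Hh : forall t, inRn (S m) (h t)).
{ intros t i Hi; unfold h.
  rewrite (proj1 (sph_curve_sphere m x v Hxs Hv Hvx t)), (proj1 Hxs) by auto; ring. }
destruct (sph_curve_second_order m x v Hxs Hvx) as [C [HC Hsecond]].
destruct (curve_distn_small (S m) h v C HC Hsecond x (Rmin ex (eps - distn (S m) p x)))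
  as [d [Hd Hnear]]; [apply Rmin_glb_lt; lra|].
apply (derivable_pt_lim_locally_ext (fun t => F (vadd x (h t))) _ 0 (- d) d); [lra| |].
- intros t Ht; rewrite Hcurve.
  assert (Hdist : distn (S m) x (sph_curve m x v t) < Rmin ex (eps - distn (S m) p x))
    by (rewrite <- Hcurve; apply Hnear, Rabs_def1; lra).
  pose proof (Rmin_l ex (eps - distn (S m) p x)); pose proof (Rmin_r ex (eps - distn (S m) p x)).
  apply HF; [apply Hexo; [apply sph_curve_sphere; auto | lra] |].
  pose proof (distn_triangle (S m) p x (sph_curve m x v t)); lra.
- apply (derivable_pt_lim_along_curve (S m) h v C Hh HC Hsecond).
  apply (first_order_expansion (S m) p eps); auto; split; [apply Hxs | exact Hpx].
Qed.

Lemma sph_gradient_tangential x : Om x -> distn (S m) p x < eps -> forall j, (j < S m)%nat ->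
  G x j = dF j x - x j * sumR (S m) (fun i => dF i x * x i).
Proof.
intros Hx Hpx j Hj.
destruct (Hos x Hx) as [[Hxin Hxx] _].
destruct (Hgrad x Hx) as [HGin [HGx HGd]].
(* differentiate along the projection of the j-th basis vector onto the tangent space *)
set (v := fun i => evec j i - x j * x i).
assert (Hv : inRn (S m) v).
{ intros i Hi; unfold v, evec; destruct (Nat.eqb_spec j i); [lia|]; rewrite (Hxin i Hi); ring. }
assert (Hdot : forall w, dotn (S m) w v = w j - x j * dotn (S m) w x).
{ intros w; unfold dotn, v.
  rewrite (sumR_ext _ _ (fun i => w i * evec j i + (- x j) * (w i * x i))) by (intros; ring).
  rewrite sumR_add, sumR_scal, sumR_mul_evec by auto; ring. }
assert (Hvx : dotn (S m) v x = 0).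
{ unfold dotn; rewrite (sumR_ext _ _ (fun i => x i * v i)) by (intros; ring).
  change (dotn (S m) x v = 0); rewrite Hdot, Hxx; ring. }
pose proof (uniqueness_limite _ _ _ _ (HGd v Hv Hvx) (sph_curve_deriv x v Hx Hpx Hv Hvx)) as E.
change (sumR (S m) (fun i => dF i x * v i)) with (dotn (S m) (fun i => dF i x) v) in E.
rewrite !Hdot, HGx in E; unfold dotn in E; lra.
Qed.

End SphericalGradient.

(** * The associated map *)

Section AssociatedMap.

Variables (m : nat) (Om : vec -> Prop) (rho : vec -> R) (G : vec -> vec).
Hypothesis Hos : open_in_sphere m Om.

Lemma open_in_sphere_inRn x : Om x -> inRn (S m) x.
Proof. intros Hx; apply (Hos x Hx). Qed.

Section Smooth.

Hypothesis Hsm : smooth_on_sphere m Om rho.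
Hypothesis Hgrad : sph_gradient m Om rho G.

Lemma rho_grad_cont_within x : Om x ->
  cont_within (S m) Om x rho /\ forall j, (j < S m)%nat -> cont_within (S m) Om x (fun z => G z j).
Proof.
intros Hx; destruct (Hsm x Hx) as [eps [F [Heps [Hsmooth HF]]]].
destruct (Hsmooth 1%nat) as [dF [Hpart Hcont]].
assert (Hxb : balln (S m) x eps x) by (split; [apply open_in_sphere_inRn; auto | rewrite distn_refl; auto]).
assert (Hball : near (S m) Om x (balln (S m) x eps))
  by (apply near_ball; [exact Heps | exact open_in_sphere_inRn]).
assert (HdF : forall i, (i < S m)%nat -> cont_within (S m) Om x (dF i)).
{ intros i Hi; apply (cont_within_sub _ _ _ _ _ Hball), Ck0_cont_within; [exact (Hcont i Hi) | exact Hxb]. }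
split.
- apply (cont_within_local_ext _ _ _ _ F); auto.
  + exists eps; split; auto; intros z Hz Hzd; symmetry; apply HF; auto.
  + apply (cont_within_sub _ _ _ _ _ Hball), Ck0_cont_within; auto; apply (Hsmooth 0%nat).
- intros j Hj.
  apply (cont_within_local_ext _ _ _ _ (fun z => dF j z + - (z j * sumR (S m) (fun i => dF i z * z i)))); auto.
  + exists eps; split; auto; intros z Hz Hzd.
    rewrite (sph_gradient_tangential m Om rho G Hos Hgrad x eps F dF HF Hpart Hcont z Hz Hzd j Hj); ring.
  + apply cont_within_plus, cont_within_opp, cont_within_mult; auto using cont_within_coord.
    apply cont_within_sumR; intros i Hi; apply cont_within_mult; auto using cont_within_coord.
Qed.

Lemma assoc_map_cont_within x : Om x ->
  forall j, (j < S (S m))%nat -> cont_within (S m) Om x (fun z => assoc_map m rho G z j).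
Proof.
intros Hx; destruct (rho_grad_cont_within x Hx) as [Hrho HG].
assert (Hexp : forall f, cont_within (S m) Om x f -> cont_within (S m) Om x (fun z => exp (f z)))
  by (intros f Hf; apply cont_within_comp; auto; apply derivable_continuous_pt, derivable_pt_exp).
assert (Hc : cont_within (S m) Om x (fun z => exp (rho z) / 2 *
               (1 + exp (-2 * rho z) * (1 + dotn (S m) (G z) (G z))))).
{ unfold Rdiv; repeat first
    [ apply cont_within_mult | apply cont_within_plus | apply cont_within_const | apply Hexp ]; auto.
  apply cont_within_sumR; intros i Hi; apply cont_within_mult; auto. }
intros [|j] Hj; unfold assoc_map; cbv beta iota zeta; [exact Hc|].
apply cont_within_plus; apply cont_within_mult; auto.
- apply cont_within_coord; lia.
- apply Hexp, cont_within_opp; auto.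
- apply cont_within_plus; [apply cont_within_opp, cont_within_coord | apply HG]; lia.
Qed.

End Smooth.

Lemma assoc_map_inRn x : Om x -> sph_gradient m Om rho G -> inRn (S (S m)) (assoc_map m rho G x).
Proof.
intros Hx Hgrad [|j] Hj; [lia|]; destruct (Hgrad x Hx) as [HGin _].
unfold assoc_map; cbv beta iota zeta.
rewrite (open_in_sphere_inRn x Hx j), (HGin j) by lia; ring.
Qed.

End AssociatedMap.

Lemma assoc_map_time_ge m rho G x : exp (Rabs (rho x)) / 2 <= assoc_map m rho G x 0%nat.
Proof.
unfold assoc_map; cbv beta iota zeta.
set (r := rho x); set (q := dotn (S m) (G x) (G x)).
assert (Hq : 0 <= q) by (apply sumR_ge0; intros; apply Rle_0_sqr).
pose proof (exp_pos r); pose proof (exp_pos (- r)).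
assert (E : exp r * exp (-2 * r) = exp (- r)) by (rewrite <- exp_plus; f_equal; ring).
replace (exp r / 2 * (1 + exp (-2 * r) * (1 + q))) with (exp r / 2 + exp (- r) * (1 + q) / 2)
  by (rewrite <- E; field).
destruct (Rle_dec 0 r); [rewrite Rabs_pos_eq by lra | rewrite Rabs_left1 by lra]; nra.
Qed.

Lemma rho_bounded_of_time_lt m rho G x M : assoc_map m rho G x 0%nat < M ->
  - ln (2 * Rmax M 1) <= rho x <= ln (2 * Rmax M 1).
Proof.
intros HM; pose proof (assoc_map_time_ge m rho G x); pose proof (Rmax_l M 1).
assert (Hlt : Rabs (rho x) < ln (2 * Rmax M 1)).
{ rewrite <- (ln_exp (Rabs (rho x))); apply ln_increasing; [apply exp_pos | lra]. }
destruct (Rabs_def2 _ _ Hlt); lra.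
Qed.

Theorem mainTheorem2 (m : nat) (Om : vec -> Prop) (rho : vec -> R) (G : vec -> vec) :
  sphere_domain m Om ->
  (exists x, sphere m x /\ ~ Om x) ->
  smooth_on_sphere m Om rho ->
  proper_real m Om rho ->
  sph_gradient m Om rho G ->
  proper_to_hyp m Om (assoc_map m rho G).
Proof.
intros [_ [Hos _]] _ Hsm Hprop Hgrad K _ HK.
destruct (compact_n_coord_bounded _ K 0 HK) as [M HM]; [lia|].
set (b := ln (2 * Rmax M 1)).
apply (compact_n_closed_subset _ (fun x => Om x /\ - b <= rho x <= b)).
- apply (Hprop (fun c => - b <= c <= b)), compact_P3.
- intros x [Hx HKx]; split; auto; apply (rho_bounded_of_time_lt m rho G), HM, HKx.
- intros x [Hx _] HnS.
  apply (near_mono _ _ _ (fun z => ~ K (assoc_map m rho G z))); [intros z [_ HKz] Hz; auto|].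
  apply (near_sub _ Om); [intros z HS; apply HS|].
  apply (cont_within_preimage_avoids _ (S (S m))); auto.
  + apply (assoc_map_inRn m Om); auto.
  + apply (assoc_map_cont_within m Om); auto.
Qed.
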